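(* Let $\alpha$ be a unit-speed curve in $\mathbb{R}^3$ with arc length $s$, nonzero curvature $\kappa$ and torsion $\tau$. Let $\alpha_T$ be its tangent indicatrix, with arc length $s_T=\int\kappa\,ds$, and let $\beta$ be an evolute-direction curve of $\alpha_T$ (an $X$-direction curve of $\alpha_T$ with $N_\beta=T_T$). Then there is a function $\psi(s)$ with $$\frac{d\psi}{ds}=\frac{\kappa^3}{(\kappa^2+\tau^2)^{3/2}}\Big(\frac{\tau}{\kappa}\Big)'\sqrt{1+\Big(\frac{\tau}{\kappa}\Big)^2}$$ such that, at corresponding parameter values, $$\frac{\tau_\beta}{\kappa_\beta}=-\cot\psi.$$ Moreover, $$\frac{\kappa_\beta^2}{(\kappa_\beta^2+\tau_\beta^2)^{3/2}}\,\frac{d}{ds_T}\Big(\frac{\tau_\beta}{\kappa_\beta}\Big)=\frac{\kappa^2}{(\kappa^2+\tau^2)^{3/2}}\Big(\frac{\tau}{\kappa}\Big)'.$$ Here $'$ denotes $d/ds$.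
   Context: Let $\alpha:I\subset\mathbb{R}\to\mathbb{R}^3$ be a unit-speed curve with arc length $s$, curvature $\kappa>0$, torsion $\tau$ and Frenet frame $\{T,N,B\}$. Put $f=\tau/\kappa$ and $\sigma=\frac{\kappa^2}{(\kappa^2+\tau^2)^{3/2}}(\tau/\kappa)'$, with $'=d/ds$. The tangent indicatrix of $\alpha$ is the curve $\alpha_T=T$ on the unit sphere. Its arc length is $s_T=\int\kappa\,ds$, so parameters $s$ and $s_T(s)$ correspond. Its Frenet apparatus is $\{T_T,N_T,B_T,\kappa_T,\tau_T\}$, with $\frac{dT_T}{ds_T}=\kappa_TN_T$, $\frac{dN_T}{ds_T}=-\kappa_TT_T+\tau_TB_T$ and $\frac{dB_T}{ds_T}=-\tau_TN_T$. It is known that $T_T=N$, $\kappa_T=\sqrt{1+f^2}$ and $\tau_T=\sigma\sqrt{1+f^2}$. Let $x,y,z$ be real functions of $s_T$ with $x^2+y^2+z^2=1$, and set $X=xT_T+yN_T+zB_T$. An integral curve $\beta$ of $X$, meaning $d\beta/ds_T=X$, is an $X$-direction curve of $\alpha_T$. It has unit speed with arc length $s_T$. It is regarded as a Frenet curve with frame $\{T_\beta=X,N_\beta,B_\beta\}$, curvature $\kappa_\beta>0$ and torsion $\tau_\beta$. $\beta$ is an evolute-direction curve of $\alpha_T$ if $N_\beta=T_T$. *)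

From Stdlib Require Import Reals.
From Coquelicot Require Import Coquelicot.
Open Scope R_scope.

Definition vec3 : Type := (R * R * R)%type.
Definition v3 (a b c : R) : vec3 := (a, b, c).
Definition vx (v : vec3) : R := fst (fst v).
Definition vy (v : vec3) : R := snd (fst v).
Definition vz (v : vec3) : R := snd v.

Definition vadd (u v : vec3) : vec3 := v3 (vx u + vx v) (vy u + vy v) (vz u + vz v).
Definition vscal (k : R) (v : vec3) : vec3 := v3 (k * vx v) (k * vy v) (k * vz v).
Definition dot (u v : vec3) : R := vx u * vx v + vy u * vy v + vz u * vz v.
Definition cross (u v : vec3) : vec3 :=
  v3 (vy u * vz v - vz u * vy v)
     (vz u * vx v - vx u * vz v)
     (vx u * vy v - vy u * vx v).

Definition has_vderiv (f : R -> vec3) (t : R) (v : vec3) : Prop :=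
  is_derive (fun s => vx (f s)) t (vx v) /\
  is_derive (fun s => vy (f s)) t (vy v) /\
  is_derive (fun s => vz (f s)) t (vz v).

Definition frenet_apparatus (D : R -> Prop) (c T N B : R -> vec3)
    (k tau : R -> R) : Prop :=
  forall t, D t ->
    has_vderiv c t (T t) /\
    has_vderiv T t (vscal (k t) (N t)) /\
    has_vderiv N t (vadd (vscal (- k t) (T t)) (vscal (tau t) (B t))) /\
    has_vderiv B t (vscal (- tau t) (N t)) /\
    0 < k t /\
    dot (T t) (T t) = 1 /\ dot (N t) (N t) = 1 /\ dot (T t) (N t) = 0 /\
    B t = cross (T t) (N t).

(* Along the tangent indicatrix the Frenet frame is T_T = N,
   N_T = (-T + f B) / sqrt (1 + f^2) and B_T = (f T + B) / sqrt (1 + f^2), with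
   f = tau / k; hence k_T = sqrt (1 + f^2), and comparing the two expressions for
   the derivative of N_T along B_T gives k tau_T = f' / (1 + f^2), i.e.
   tau_T = sigma sqrt (1 + f^2).
   For an evolute-direction curve, N_beta = T_T forces X = y N_T + z B_T with
   y^2 + z^2 = 1; differentiating X . T_T = 0 and B_beta . T_T = 0 gives
   k_beta = - k_T y and tau_beta = k_T z.  The pair (y, z) rotates with angular
   speed tau_T, so psi = arccot (z / y) has d psi / ds_T = tau_T and
   tau_beta / k_beta = - z / y = - cot psi, while sigma_beta = tau_T / k_T = sigma.
   These identities hold on J = s_T(I), which is open because s_T' = k > 0; this
   is what allows differentiating them. *)

From Stdlib Require Import Reals Lra.
From Coquelicot Require Import Coquelicot.
Open Scope R_scope.

Definition frame_comb (T N B : vec3) (a b c : R) : vec3 :=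
  vadd (vadd (vscal a T) (vscal b N)) (vscal c B).

Definition right_frame (T N B : vec3) : Prop :=
  dot T T = 1 /\ dot N N = 1 /\ dot T N = 0 /\ B = cross T N.

Lemma vec3_ext (u v : vec3) : vx u = vx v -> vy u = vy v -> vz u = vz v -> u = v.
Proof.
  destruct u as [[u1 u2] u3], v as [[v1 v2] v3]; unfold vx, vy, vz; simpl.
  intros -> -> ->; reflexivity.
Qed.

Ltac vec3_ring :=
  apply vec3_ext; unfold frame_comb, dot, cross, vadd, vscal, v3, vx, vy, vz; simpl; ring.

Lemma dot_comm (u v : vec3) : dot u v = dot v u.
Proof. unfold dot; ring. Qed.

Lemma dot_cross_l (u v : vec3) : dot u (cross u v) = 0.
Proof. unfold dot, cross, v3, vx, vy, vz; simpl; ring. Qed.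

Lemma dot_cross_r (u v : vec3) : dot v (cross u v) = 0.
Proof. unfold dot, cross, v3, vx, vy, vz; simpl; ring. Qed.

Lemma dot_cross_cross (u v : vec3) :
  dot (cross u v) (cross u v) = dot u u * dot v v - dot u v ^ 2.
Proof. unfold dot, cross, v3, vx, vy, vz; simpl; ring. Qed.

Lemma cross_cross_r (u v w : vec3) :
  cross u (cross v w) = vadd (vscal (dot u w) v) (vscal (- dot u v) w).
Proof. vec3_ring. Qed.

Lemma cross_cross_l (u v w : vec3) :
  cross (cross v w) u = vadd (vscal (dot u v) w) (vscal (- dot u w) v).
Proof. vec3_ring. Qed.

Lemma vscal_inj (r : R) (u v : vec3) : r <> 0 -> vscal r u = vscal r v -> u = v.
Proof.
  intros hr huv; apply vec3_ext;
    [ apply (f_equal vx) in huv | apply (f_equal vy) in huv | apply (f_equal vz) in huv ];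
    unfold vscal, v3, vx, vy, vz in huv |- *; simpl in huv |- *;
    apply (Rmult_eq_reg_l r); assumption.
Qed.

Lemma vscal_frame_comb (r : R) (T N B : vec3) (a b c : R) :
  vscal r (frame_comb T N B a b c) = frame_comb T N B (r * a) (r * b) (r * c).
Proof. vec3_ring. Qed.

Section RightFrame.

Context {T N B : vec3}.
Hypothesis hframe : right_frame T N B.

Lemma right_frame_cross_NB : cross N B = T.
Proof.
  destruct hframe as [hT [hN [hTN ->]]].
  rewrite cross_cross_r, hN, dot_comm, hTN; vec3_ring.
Qed.

Lemma right_frame_cross_BT : cross B T = N.
Proof.
  destruct hframe as [hT [hN [hTN ->]]].
  rewrite cross_cross_l, hT, hTN; vec3_ring.
Qed.

Lemma right_frame_dot_comb (a b c a' b' c' : R) :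
  dot (frame_comb T N B a b c) (frame_comb T N B a' b' c') = a * a' + b * b' + c * c'.
Proof.
  destruct hframe as [hT [hN [hTN ->]]].
  transitivity (a * a' * dot T T + b * b' * dot N N + c * c' * dot (cross T N) (cross T N)
                + (a * b' + b * a') * dot T N + (a * c' + c * a') * dot T (cross T N)
                + (b * c' + c * b') * dot N (cross T N)).
  - unfold frame_comb, dot, vadd, vscal, v3, vx, vy, vz; simpl; ring.
  - rewrite dot_cross_cross, dot_cross_l, dot_cross_r, hT, hN, hTN; ring.
Qed.

Lemma right_frame_dot_T (a b c : R) : dot (frame_comb T N B a b c) T = a.
Proof.
  replace T with (frame_comb T N B 1 0 0) at 2 by vec3_ring.
  rewrite right_frame_dot_comb; ring.
Qed.

Lemma right_frame_dot_N (a b c : R) : dot (frame_comb T N B a b c) N = b.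
Proof.
  replace N with (frame_comb T N B 0 1 0) at 2 by vec3_ring.
  rewrite right_frame_dot_comb; ring.
Qed.

Lemma right_frame_dot_B (a b c : R) : dot (frame_comb T N B a b c) B = c.
Proof.
  replace B with (frame_comb T N B 0 0 1) at 2 by vec3_ring.
  rewrite right_frame_dot_comb; ring.
Qed.

Lemma right_frame_cross_comb (a b c a' b' c' : R) :
  cross (frame_comb T N B a b c) (frame_comb T N B a' b' c')
  = frame_comb T N B (b * c' - c * b') (c * a' - a * c') (a * b' - b * a').
Proof.
  transitivity (frame_comb (cross N B) (cross B T) (cross T N)
                  (b * c' - c * b') (c * a' - a * c') (a * b' - b * a')).
  - vec3_ring.
  - rewrite right_frame_cross_NB, right_frame_cross_BT.
    destruct hframe as [_ [_ [_ <-]]]; reflexivity.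
Qed.

End RightFrame.

Lemma is_derive_locally_const (F : R -> R) (t c l : R) :
  locally t (fun s => F s = c) -> is_derive F t l -> l = 0.
Proof.
  intros hc hF.
  rewrite <- (is_derive_unique F t l hF).
  apply is_derive_unique, (is_derive_ext_loc (fun _ => c)); [|exact (is_derive_const c t)].
  apply (filter_imp (fun s => F s = c)); [intros s ->; reflexivity | exact hc].
Qed.

Lemma has_vderiv_unique_loc (F G : R -> vec3) (t : R) (v w : vec3) :
  locally t (fun s => F s = G s) -> has_vderiv F t v -> has_vderiv G t w -> v = w.
Proof.
  intros hFG [hF1 [hF2 hF3]] [hG1 [hG2 hG3]].
  assert (hcomp : forall p : vec3 -> R, is_derive (fun s => p (F s)) t (p v) ->
            is_derive (fun s => p (G s)) t (p w) -> p v = p w).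
  { intros p hpF hpG.
    rewrite <- (is_derive_unique _ _ _ hpG).
    symmetry; apply is_derive_unique, (is_derive_ext_loc (fun s => p (F s))); [|exact hpF].
    apply (filter_imp (fun s => F s = G s)); [intros s ->; reflexivity | exact hFG]. }
  apply vec3_ext; apply hcomp; assumption.
Qed.

Lemma has_vderiv_comp (F : R -> vec3) (g : R -> R) (t : R) (v : vec3) (dg : R) :
  has_vderiv F (g t) v -> is_derive g t dg -> has_vderiv (fun s => F (g s)) t (vscal dg v).
Proof.
  intros [h1 [h2 h3]] hg; split; [|split].
  - exact (is_derive_comp (fun u => vx (F u)) g t _ _ h1 hg).
  - exact (is_derive_comp (fun u => vy (F u)) g t _ _ h2 hg).
  - exact (is_derive_comp (fun u => vz (F u)) g t _ _ h3 hg).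
Qed.

Lemma is_derive_Rplus (f g : R -> R) (t df dg : R) :
  is_derive f t df -> is_derive g t dg -> is_derive (fun s => f s + g s) t (df + dg).
Proof. intros hf hg; apply (is_derive_plus f g); assumption. Qed.

Lemma is_derive_Rmult (f g : R -> R) (t df dg : R) :
  is_derive f t df -> is_derive g t dg ->
  is_derive (fun s => f s * g s) t (df * g t + f t * dg).
Proof. intros hf hg; apply (is_derive_mult f g); [exact hf | exact hg | apply Rmult_comm]. Qed.

Lemma is_derive_sum3_mult (a b c p q r : R -> R) (t da db dc dp dq dr : R) :
  is_derive a t da -> is_derive b t db -> is_derive c t dc ->
  is_derive p t dp -> is_derive q t dq -> is_derive r t dr ->
  is_derive (fun s => a s * p s + b s * q s + c s * r s) t
    (da * p t + db * q t + dc * r t + (a t * dp + b t * dq + c t * dr)).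
Proof.
  intros ha hb hc hp hq hr.
  replace (_ + (_ + _ + _)) with ((da * p t + a t * dp) + (db * q t + b t * dq)
                                  + (dc * r t + c t * dr)) by ring.
  apply is_derive_Rplus; [apply is_derive_Rplus|]; apply is_derive_Rmult; assumption.
Qed.

Lemma is_derive_dot (F G : R -> vec3) (t : R) (dF dG : vec3) :
  has_vderiv F t dF -> has_vderiv G t dG ->
  is_derive (fun s => dot (F s) (G s)) t (dot dF (G t) + dot (F t) dG).
Proof.
  intros [hF1 [hF2 hF3]] [hG1 [hG2 hG3]]; unfold dot.
  apply is_derive_sum3_mult; assumption.
Qed.

Lemma has_vderiv_frame_comb (T N B : R -> vec3) (a b c : R -> R) (t : R)
    (dT dN dB : vec3) (da db dc : R) :
  has_vderiv T t dT -> has_vderiv N t dN -> has_vderiv B t dB ->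
  is_derive a t da -> is_derive b t db -> is_derive c t dc ->
  has_vderiv (fun s => frame_comb (T s) (N s) (B s) (a s) (b s) (c s)) t
    (vadd (frame_comb (T t) (N t) (B t) da db dc) (frame_comb dT dN dB (a t) (b t) (c t))).
Proof.
  intros [hT1 [hT2 hT3]] [hN1 [hN2 hN3]] [hB1 [hB2 hB3]] ha hb hc.
  unfold has_vderiv, frame_comb, vadd, vscal, v3, vx, vy, vz in *; simpl in *.
  split; [|split]; apply is_derive_sum3_mult; assumption.
Qed.

Lemma locally_image_of_pos_derive (a b : Rbar) (g dg : R -> R) :
  (forall s : R, Rbar_lt a s /\ Rbar_lt s b -> is_derive g s (dg s)) ->
  (forall s : R, Rbar_lt a s /\ Rbar_lt s b -> 0 < dg s) ->
  forall s : R, Rbar_lt a s /\ Rbar_lt s b ->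
  locally (g s) (fun u => exists r : R, (Rbar_lt a r /\ Rbar_lt r b) /\ u = g r).
Proof.
  intros hg hdg s Is.
  destruct (open_and _ _ (open_Rbar_gt a) (open_Rbar_lt b) s Is) as [eps heps].
  pose proof (cond_pos eps) as heps_pos.
  set (s1 := s - eps / 2); set (s2 := s + eps / 2).
  assert (hsub : forall r : R, s1 <= r <= s2 -> Rbar_lt a r /\ Rbar_lt r b).
  { intros r hr; apply heps.
    change (Rabs (r - s) < eps); apply Rabs_def1; unfold s1, s2 in hr; lra. }
  assert (hincr : forall p q, s1 <= p -> p < q -> q <= s2 -> g p < g q).
  { intros p q hp hpq hq.
    apply (incr_function g a b dg (fun r ha hb => hg r (conj ha hb))
             (fun r ha hb => hdg r (conj ha hb)));
      [apply hsub; lra | exact hpq | apply hsub; lra]. }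
  assert (h1 : g s1 < g s) by (apply hincr; unfold s1, s2; lra).
  assert (h2 : g s < g s2) by (apply hincr; unfold s1, s2; lra).
  assert (hdelta : 0 < Rmin (g s - g s1) (g s2 - g s)) by (apply Rmin_pos; lra).
  exists (mkposreal _ hdelta); intros v hv.
  change (Rabs (v - g s) < Rmin (g s - g s1) (g s2 - g s)) in hv.
  pose proof (Rmin_l (g s - g s1) (g s2 - g s)).
  pose proof (Rmin_r (g s - g s1) (g s2 - g s)).
  apply Rabs_def2 in hv.
  destruct (Ranalysis5.IVT_interv (fun r => g r - v) s1 s2) as [t [ht hgt]].
  - intros r hr; apply continuity_pt_minus.
    + apply continuity_pt_filterlim, (ex_derive_continuous g).
      exists (dg r); apply hg, hsub, hr.
    + apply continuity_pt_const; intros ? ?; reflexivity.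
  - unfold s1, s2; lra.
  - lra.
  - lra.
  - exists t; split; [apply hsub, ht | lra].
Qed.

Definition arccot (q : R) : R := PI / 2 - atan q.

Lemma cot_arccot (q : R) : cos (arccot q) / sin (arccot q) = q.
Proof. unfold arccot; rewrite cos_shift, sin_shift; exact (tan_atan q). Qed.

Lemma is_derive_arccot (q : R) : is_derive arccot q (- / (1 + q ^ 2)).
Proof.
  replace (- / (1 + q ^ 2)) with (0 - / (1 + q²)) by (unfold Rsqr; field; nra).
  apply (is_derive_minus (fun _ => PI / 2) atan);
    [exact (is_derive_const _ q) | apply is_derive_atan].
Qed.

Lemma is_derive_arccot_ratio (Y Z : R -> R) (u w : R) :
  is_derive Y u (w * Z u) -> is_derive Z u (- w * Y u) -> Y u <> 0 ->
  is_derive (fun v => arccot (Z v / Y v)) u w.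
Proof.
  intros hY hZ hY0.
  pose proof (is_derive_comp arccot (fun v => Z v / Y v) u _ _
                (is_derive_arccot _) (is_derive_div Z Y u _ _ hZ hY hY0)) as h.
  replace w with (scal ((- w * Y u * Y u - Z u * (w * Z u)) / Y u ^ 2)
                       (- / (1 + (Z u / Y u) ^ 2))); [exact h|].
  change scal with Rmult; simpl.
  assert (0 < Y u * Y u) by (apply Rsqr_pos_lt; exact hY0).
  field; split; [exact hY0 | nra].
Qed.

Section FrenetApparatus.

Context {D : R -> Prop} {gamma T N B : R -> vec3} {k tau : R -> R}.
Hypothesis hF : frenet_apparatus D gamma T N B k tau.

Lemma frenet_curve_deriv (t : R) : D t -> has_vderiv gamma t (T t).
Proof. intros Dt; apply (hF t Dt). Qed.

Lemma frenet_curvature_pos (t : R) : D t -> 0 < k t.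
Proof. intros Dt; apply (hF t Dt). Qed.

Lemma frenet_right_frame (t : R) : D t -> right_frame (T t) (N t) (B t).
Proof. intros Dt; destruct (hF t Dt) as [_ [_ [_ [_ [_ h]]]]]; exact h. Qed.

Lemma frenet_tangent_deriv (t : R) :
  D t -> has_vderiv T t (frame_comb (T t) (N t) (B t) 0 (k t) 0).
Proof.
  intros Dt; destruct (hF t Dt) as [_ [hT _]].
  replace (frame_comb _ _ _ _ _ _) with (vscal (k t) (N t)) by vec3_ring; exact hT.
Qed.

Lemma frenet_normal_deriv (t : R) :
  D t -> has_vderiv N t (frame_comb (T t) (N t) (B t) (- k t) 0 (tau t)).
Proof.
  intros Dt; destruct (hF t Dt) as [_ [_ [hN _]]].
  replace (frame_comb _ _ _ _ _ _) with (vadd (vscal (- k t) (T t)) (vscal (tau t) (B t)))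
    by vec3_ring; exact hN.
Qed.

Lemma frenet_binormal_deriv (t : R) :
  D t -> has_vderiv B t (frame_comb (T t) (N t) (B t) 0 (- tau t) 0).
Proof.
  intros Dt; destruct (hF t Dt) as [_ [_ [_ [hB _]]]].
  replace (frame_comb _ _ _ _ _ _) with (vscal (- tau t) (N t)) by vec3_ring; exact hB.
Qed.

Lemma frenet_deriv_frame_comb (a b c : R -> R) (t da db dc : R) :
  D t -> is_derive a t da -> is_derive b t db -> is_derive c t dc ->
  has_vderiv (fun s => frame_comb (T s) (N s) (B s) (a s) (b s) (c s)) t
    (frame_comb (T t) (N t) (B t)
       (da - k t * b t) (db + k t * a t - tau t * c t) (dc + tau t * b t)).
Proof.
  intros Dt ha hb hc.
  pose proof (has_vderiv_frame_comb T N B a b c t _ _ _ _ _ _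
    (frenet_tangent_deriv t Dt) (frenet_normal_deriv t Dt) (frenet_binormal_deriv t Dt)
    ha hb hc) as h.
  replace (frame_comb _ _ _ _ _ _) with
    (vadd (frame_comb (T t) (N t) (B t) da db dc)
       (frame_comb (frame_comb (T t) (N t) (B t) 0 (k t) 0)
          (frame_comb (T t) (N t) (B t) (- k t) 0 (tau t))
          (frame_comb (T t) (N t) (B t) 0 (- tau t) 0) (a t) (b t) (c t)))
    by vec3_ring.
  exact h.
Qed.

End FrenetApparatus.

Definition frenet_sigma (k tau : R -> R) (s : R) : R :=
  k s ^ 2 / sqrt (k s ^ 2 + tau s ^ 2) ^ 3 * Derive (fun r => tau r / k r) s.

Lemma sqrt_sum_sq_factor (k t : R) : 0 < k -> sqrt (k ^ 2 + t ^ 2) = k * sqrt (1 + (t / k) ^ 2).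
Proof.
  intros hk.
  replace (k ^ 2 + t ^ 2) with (k ^ 2 * (1 + (t / k) ^ 2)) by (field; lra).
  rewrite sqrt_mult_alt, sqrt_pow2; [reflexivity | lra | apply pow2_ge_0].
Qed.

Section TangentIndicatrix.

Context {I J : R -> Prop} {alpha T N B alphaT TT NT BT : R -> vec3}.
Context {k tau sT kT tauT : R -> R}.
Hypothesis hI_open : forall s, I s -> locally s I.
Hypothesis hF : frenet_apparatus I alpha T N B k tau.
Hypothesis hk_tau : forall s, I s -> ex_derive k s /\ ex_derive tau s.
Hypothesis hsT : forall s, I s -> is_derive sT s (k s).
Hypothesis hJ : forall s, I s -> J (sT s).
Hypothesis haT : forall s, I s -> alphaT (sT s) = T s.
Hypothesis hFT : frenet_apparatus J alphaT TT NT BT kT tauT.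

Lemma tangent_indicatrix_tangent (s : R) : I s -> TT (sT s) = N s.
Proof.
  intros Is.
  apply (vscal_inj (k s)); [apply Rgt_not_eq, (frenet_curvature_pos hF s Is)|].
  apply (has_vderiv_unique_loc (fun r => alphaT (sT r)) T s).
  - exact (filter_imp I _ haT (hI_open s Is)).
  - exact (has_vderiv_comp alphaT sT s _ _ (frenet_curve_deriv hFT _ (hJ s Is)) (hsT s Is)).
  - apply (hF s Is).
Qed.

Lemma tangent_indicatrix_normal_scaled (s : R) :
  I s -> vscal (kT (sT s)) (NT (sT s)) = frame_comb (T s) (N s) (B s) (-1) 0 (tau s / k s).
Proof.
  intros Is.
  pose proof (frenet_curvature_pos hF s Is) as hk.
  apply (vscal_inj (k s)); [lra|].
  transitivity (vscal (k s) (frame_comb (TT (sT s)) (NT (sT s)) (BT (sT s)) 0 (kT (sT s)) 0));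
    [f_equal; vec3_ring|].
  rewrite (has_vderiv_unique_loc (fun r => TT (sT r)) N s _ _
             (filter_imp I _ tangent_indicatrix_tangent (hI_open s Is))
             (has_vderiv_comp TT sT s _ _ (frenet_tangent_deriv hFT _ (hJ s Is)) (hsT s Is))
             (frenet_normal_deriv hF s Is)).
  rewrite vscal_frame_comb; f_equal; field; lra.
Qed.

Lemma tangent_indicatrix_curvature (s : R) :
  I s -> kT (sT s) = sqrt (1 + (tau s / k s) ^ 2).
Proof.
  intros Is.
  pose proof (frenet_curvature_pos hFT _ (hJ s Is)) as hkT.
  pose proof (f_equal (fun v => dot v v) (tangent_indicatrix_normal_scaled s Is)) as h.
  simpl in h.
  replace (vscal (kT (sT s)) (NT (sT s)))
    with (frame_comb (TT (sT s)) (NT (sT s)) (BT (sT s)) 0 (kT (sT s)) 0) in h by vec3_ring.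
  rewrite (right_frame_dot_comb (frenet_right_frame hFT _ (hJ s Is))),
          (right_frame_dot_comb (frenet_right_frame hF s Is)) in h.
  rewrite <- (sqrt_pow2 (kT (sT s))) by lra.
  f_equal; transitivity (0 * 0 + kT (sT s) * kT (sT s) + 0 * 0); [ring|].
  rewrite h; ring.
Qed.

Lemma tangent_indicatrix_normal (s : R) :
  I s -> NT (sT s) = frame_comb (T s) (N s) (B s)
                       (- / sqrt (1 + (tau s / k s) ^ 2)) 0
                       (tau s / k s / sqrt (1 + (tau s / k s) ^ 2)).
Proof.
  intros Is.
  pose proof (frenet_curvature_pos hFT _ (hJ s Is)) as hkT.
  apply (vscal_inj (kT (sT s))); [lra|].
  rewrite tangent_indicatrix_normal_scaled, vscal_frame_comb by exact Is.
  rewrite <- tangent_indicatrix_curvature by exact Is.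
  pose proof (frenet_curvature_pos hF s Is).
  f_equal; field; lra.
Qed.

Lemma tangent_indicatrix_binormal (s : R) :
  I s -> BT (sT s) = frame_comb (T s) (N s) (B s)
                       (tau s / k s / sqrt (1 + (tau s / k s) ^ 2)) 0
                       (/ sqrt (1 + (tau s / k s) ^ 2)).
Proof.
  intros Is.
  destruct (frenet_right_frame hFT _ (hJ s Is)) as [_ [_ [_ ->]]].
  rewrite tangent_indicatrix_tangent, tangent_indicatrix_normal by exact Is.
  replace (N s) with (frame_comb (T s) (N s) (B s) 0 1 0) at 1 by vec3_ring.
  rewrite (right_frame_cross_comb (frenet_right_frame hF s Is)).
  f_equal; ring.
Qed.

Lemma tangent_indicatrix_torsion (s : R) :
  I s -> tauT (sT s) = frenet_sigma k tau s * sqrt (1 + (tau s / k s) ^ 2).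
Proof.
  intros Is.
  pose proof (frenet_curvature_pos hF s Is) as hk.
  set (f := fun r => tau r / k r).
  set (rho := fun r => sqrt (1 + f r ^ 2)).
  assert (hf : is_derive f s (Derive f s)).
  { destruct (hk_tau s Is) as [hk' htau'].
    apply Derive_correct, ex_derive_div; [exact htau' | exact hk' | lra]. }
  assert (hrho_pos : 0 < rho s) by (apply sqrt_lt_R0; pose proof (pow2_ge_0 (f s)); lra).
  assert (hrho : is_derive rho s (2 * f s * Derive f s / (2 * rho s))).
  { apply is_derive_sqrt; [|pose proof (pow2_ge_0 (f s)); lra].
    replace (2 * f s * Derive f s) with (0 + INR 2 * Derive f s * f s ^ Nat.pred 2)
      by (simpl; ring).
    apply is_derive_Rplus; [exact (is_derive_const 1 s) | apply is_derive_pow, hf]. }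
  (* Differentiate N_T (sT s) through the Frenet equations of alpha_T and through its
     expression in the frame of alpha, and compare the B_T components. *)
  assert (hNT := has_vderiv_comp NT sT s _ _ (frenet_normal_deriv hFT _ (hJ s Is)) (hsT s Is)).
  assert (hG := frenet_deriv_frame_comb hF (fun r => - / rho r) (fun _ => 0) (fun r => f r / rho r)
                  s _ _ _ Is
                  (is_derive_opp _ _ _ (is_derive_inv _ _ _ hrho (Rgt_not_eq _ _ hrho_pos)))
                  (is_derive_const 0 s)
                  (is_derive_div _ _ _ _ _ hf hrho (Rgt_not_eq _ _ hrho_pos))).
  pose proof (f_equal (fun v => dot v (BT (sT s)))
                (has_vderiv_unique_loc _ _ s _ _
                   (filter_imp I _ tangent_indicatrix_normal (hI_open s Is)) hNT hG)) as h.
  simpl in h.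
  rewrite vscal_frame_comb, (right_frame_dot_B (frenet_right_frame hFT _ (hJ s Is))),
          tangent_indicatrix_binormal, (right_frame_dot_comb (frenet_right_frame hF s Is)) in h
    by exact Is.
  unfold frenet_sigma; rewrite sqrt_sum_sq_factor by exact hk.
  apply (Rmult_eq_reg_l (k s)); [|lra].
  rewrite h; change opp with Ropp; change zero with 0.
  unfold rho, f; field.
  split; [exact (Rgt_not_eq _ _ hrho_pos) | lra].
Qed.

End TangentIndicatrix.

Section EvoluteDirection.

Context {J : R -> Prop} {alphaT TT NT BT beta Nb Bb : R -> vec3}.
Context {kT tauT x y z kb taub : R -> R}.

Local Notation X u := (frame_comb (TT u) (NT u) (BT u) (x u) (y u) (z u)).

Hypothesis hJ_open : forall u, J u -> locally u J.
Hypothesis hFT : frenet_apparatus J alphaT TT NT BT kT tauT.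
Hypothesis hFb : frenet_apparatus J beta (fun u => X u) Nb Bb kb taub.
Hypothesis hNb : forall u, J u -> Nb u = TT u.

Lemma evolute_direction_tangent_coord (u : R) : J u -> x u = 0.
Proof.
  intros Ju.
  destruct (frenet_right_frame hFb u Ju) as [_ [_ [hXN _]]].
  rewrite hNb, (right_frame_dot_T (frenet_right_frame hFT u Ju)) in hXN by exact Ju.
  exact hXN.
Qed.

Lemma evolute_direction_unit (u : R) : J u -> y u ^ 2 + z u ^ 2 = 1.
Proof.
  intros Ju.
  destruct (frenet_right_frame hFb u Ju) as [hXX _].
  rewrite (right_frame_dot_comb (frenet_right_frame hFT u Ju)),
          evolute_direction_tangent_coord in hXX by exact Ju.
  rewrite <- hXX; ring.
Qed.

Lemma evolute_direction_binormal (u : R) :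
  J u -> Bb u = frame_comb (TT u) (NT u) (BT u) 0 (z u) (- y u).
Proof.
  intros Ju.
  destruct (frenet_right_frame hFb u Ju) as [_ [_ [_ ->]]].
  rewrite hNb by exact Ju.
  transitivity (cross (X u) (frame_comb (TT u) (NT u) (BT u) 1 0 0)); [f_equal; vec3_ring|].
  rewrite (right_frame_cross_comb (frenet_right_frame hFT u Ju)).
  f_equal; ring.
Qed.

Lemma evolute_direction_tangent_deriv (u : R) :
  J u -> has_vderiv (fun v => X v) u (frame_comb (TT u) (NT u) (BT u) (kb u) 0 0).
Proof.
  intros Ju; destruct (hFb u Ju) as [_ [hX _]].
  rewrite hNb in hX by exact Ju.
  replace (frame_comb _ _ _ _ _ _) with (vscal (kb u) (TT u)) by vec3_ring; exact hX.
Qed.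

Lemma evolute_direction_binormal_deriv (u : R) :
  J u -> has_vderiv Bb u (frame_comb (TT u) (NT u) (BT u) (- taub u) 0 0).
Proof.
  intros Ju; destruct (hFb u Ju) as [_ [_ [_ [hB _]]]].
  rewrite hNb in hB by exact Ju.
  replace (frame_comb _ _ _ _ _ _) with (vscal (- taub u) (TT u)) by vec3_ring; exact hB.
Qed.

Lemma evolute_direction_curvature (u : R) : J u -> kb u = - kT u * y u.
Proof.
  intros Ju.
  pose proof (frenet_right_frame hFT u Ju) as hframe.
  assert (hXT : forall v, J v -> dot (X v) (TT v) = 0).
  { intros v Jv.
    rewrite (right_frame_dot_T (frenet_right_frame hFT v Jv)).
    exact (evolute_direction_tangent_coord v Jv). }
  pose proof (is_derive_locally_const _ u 0 _ (filter_imp J _ hXT (hJ_open u Ju))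
    (is_derive_dot _ _ u _ _ (evolute_direction_tangent_deriv u Ju)
                               (frenet_tangent_deriv hFT u Ju))) as h.
  rewrite (right_frame_dot_T hframe), (right_frame_dot_comb hframe) in h.
  lra.
Qed.

Lemma evolute_direction_torsion (u : R) : J u -> taub u = kT u * z u.
Proof.
  intros Ju.
  pose proof (frenet_right_frame hFT u Ju) as hframe.
  assert (hBT : forall v, J v -> dot (Bb v) (TT v) = 0).
  { intros v Jv.
    rewrite evolute_direction_binormal by exact Jv.
    exact (right_frame_dot_T (frenet_right_frame hFT v Jv) _ _ _). }
  pose proof (is_derive_locally_const _ u 0 _ (filter_imp J _ hBT (hJ_open u Ju))
    (is_derive_dot _ _ u _ _ (evolute_direction_binormal_deriv u Ju)
                               (frenet_tangent_deriv hFT u Ju))) as h.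
  rewrite (right_frame_dot_T hframe), evolute_direction_binormal,
          (right_frame_dot_comb hframe) in h by exact Ju.
  lra.
Qed.

Lemma evolute_direction_normal_coord_neg (u : R) : J u -> y u < 0.
Proof.
  intros Ju.
  pose proof (frenet_curvature_pos hFb u Ju) as hkb.
  pose proof (frenet_curvature_pos hFT u Ju) as hkT.
  rewrite evolute_direction_curvature in hkb by exact Ju.
  nra.
Qed.

Lemma evolute_direction_normal_coord_deriv (u : R) :
  J u -> is_derive (fun v => dot (X v) (NT v)) u (tauT u * dot (X u) (BT u)).
Proof.
  intros Ju.
  pose proof (frenet_right_frame hFT u Ju) as hframe.
  pose proof (is_derive_dot _ _ u _ _ (evolute_direction_tangent_deriv u Ju)
                                      (frenet_normal_deriv hFT u Ju)) as h.
  rewrite (right_frame_dot_N hframe), (right_frame_dot_comb hframe),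
          evolute_direction_tangent_coord in h by exact Ju.
  rewrite (right_frame_dot_B hframe).
  replace (tauT u * z u) with (0 + (0 * - kT u + y u * 0 + z u * tauT u)) by ring.
  exact h.
Qed.

Lemma evolute_direction_binormal_coord_deriv (u : R) :
  J u -> is_derive (fun v => dot (X v) (BT v)) u (- tauT u * dot (X u) (NT u)).
Proof.
  intros Ju.
  pose proof (frenet_right_frame hFT u Ju) as hframe.
  pose proof (is_derive_dot _ _ u _ _ (evolute_direction_tangent_deriv u Ju)
                                      (frenet_binormal_deriv hFT u Ju)) as h.
  rewrite (right_frame_dot_B hframe), (right_frame_dot_comb hframe) in h.
  rewrite (right_frame_dot_N hframe).
  replace (- tauT u * y u) with (0 + (x u * 0 + y u * - tauT u + z u * 0)) by ring.
  exact h.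
Qed.

Lemma evolute_direction_ratio (u : R) :
  J u -> taub u / kb u = - (dot (X u) (BT u) / dot (X u) (NT u)).
Proof.
  intros Ju.
  pose proof (frenet_right_frame hFT u Ju) as hframe.
  pose proof (frenet_curvature_pos hFT u Ju) as hkT.
  pose proof (evolute_direction_normal_coord_neg u Ju) as hy.
  rewrite evolute_direction_curvature, evolute_direction_torsion,
          (right_frame_dot_N hframe), (right_frame_dot_B hframe) by exact Ju.
  field; lra.
Qed.

Lemma evolute_direction_ratio_deriv (u : R) :
  J u -> is_derive (fun v => taub v / kb v) u (tauT u / y u ^ 2).
Proof.
  intros Ju.
  pose proof (frenet_right_frame hFT u Ju) as hframe.
  pose proof (evolute_direction_normal_coord_neg u Ju) as hy.
  apply (is_derive_ext_loc (fun v => - (dot (X v) (BT v) / dot (X v) (NT v)))).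
  - apply (filter_imp J); [|exact (hJ_open u Ju)].
    intros v Jv; symmetry; exact (evolute_direction_ratio v Jv).
  - assert (hY0 : dot (X u) (NT u) <> 0) by (rewrite (right_frame_dot_N hframe); lra).
    pose proof (is_derive_opp _ _ _
      (is_derive_div _ _ u _ _ (evolute_direction_binormal_coord_deriv u Ju)
                                (evolute_direction_normal_coord_deriv u Ju) hY0)) as h.
    cbv beta in h; rewrite (right_frame_dot_N hframe), (right_frame_dot_B hframe) in h.
    replace (tauT u / y u ^ 2)
      with (- ((- tauT u * y u * y u - z u * (tauT u * z u)) / y u ^ 2)); [exact h|].
    transitivity (tauT u * (y u ^ 2 + z u ^ 2) / y u ^ 2); [field; lra|].
    rewrite evolute_direction_unit by exact Ju; field; lra.
Qed.

Lemma evolute_direction_sigma (u : R) : J u -> frenet_sigma kb taub u = tauT u / kT u.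
Proof.
  intros Ju.
  pose proof (frenet_curvature_pos hFT u Ju) as hkT.
  pose proof (evolute_direction_normal_coord_neg u Ju) as hy.
  assert (hnorm : sqrt (kb u ^ 2 + taub u ^ 2) = kT u).
  { rewrite evolute_direction_curvature, evolute_direction_torsion by exact Ju.
    replace ((- kT u * y u) ^ 2 + (kT u * z u) ^ 2) with (kT u ^ 2 * (y u ^ 2 + z u ^ 2))
      by ring.
    rewrite evolute_direction_unit, Rmult_1_r by exact Ju.
    apply sqrt_pow2; lra. }
  unfold frenet_sigma.
  replace (Derive _ u) with (tauT u / y u ^ 2)
    by (symmetry; apply is_derive_unique, evolute_direction_ratio_deriv, Ju).
  rewrite hnorm, evolute_direction_curvature by exact Ju.
  field; lra.
Qed.

Lemma evolute_direction_angle_deriv (u : R) :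
  J u -> is_derive (fun v => arccot (dot (X v) (BT v) / dot (X v) (NT v))) u (tauT u).
Proof.
  intros Ju.
  apply is_derive_arccot_ratio.
  - exact (evolute_direction_normal_coord_deriv u Ju).
  - exact (evolute_direction_binormal_coord_deriv u Ju).
  - rewrite (right_frame_dot_N (frenet_right_frame hFT u Ju)).
    pose proof (evolute_direction_normal_coord_neg u Ju); lra.
Qed.

End EvoluteDirection.

Theorem corollary4p6
  (a b : Rbar)
  (alpha T N B : R -> vec3) (k tau : R -> R)
  (sT : R -> R)
  (alphaT TT NT BT : R -> vec3) (kT tauT : R -> R)
  (x y z : R -> R)
  (beta Nb Bb : R -> vec3) (kb taub : R -> R) :
  let I := fun s : R => Rbar_lt a (Finite s) /\ Rbar_lt (Finite s) b in
  let J := fun u : R => exists s : R, I s /\ u = sT s in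
  let X := fun u : R => vadd (vadd (vscal (x u) (TT u)) (vscal (y u) (NT u)))
                         (vscal (z u) (BT u)) in
  (* alpha : unit speed, Frenet apparatus {T,N,B,k,tau}, k > 0 *)
  frenet_apparatus I alpha T N B k tau ->
  (* smoothness of curvature and torsion (needed for (tau/k)') *)
  (forall s : R, I s -> ex_derive k s /\ ex_derive tau s) ->
  (* arc length of the tangent indicatrix: d sT / ds = k *)
  (forall s : R, I s -> is_derive sT s (k s)) ->
  (* tangent indicatrix alpha_T = T, parametrized by sT *)
  (forall s : R, I s -> alphaT (sT s) = T s) ->
  frenet_apparatus J alphaT TT NT BT kT tauT ->
  (* X-direction curve beta of alpha_T *)
  (forall u : R, J u -> x u ^ 2 + y u ^ 2 + z u ^ 2 = 1) ->
  (forall u : R, J u -> has_vderiv beta u (X u)) ->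
  frenet_apparatus J beta X Nb Bb kb taub ->
  (* evolute-direction curve: N_beta = T_T *)
  (forall u : R, J u -> Nb u = TT u) ->
  (exists psi : R -> R, forall s : R, I s ->
      is_derive psi s
        (k s ^ 3 / (sqrt (k s ^ 2 + tau s ^ 2)) ^ 3
         * Derive (fun r => tau r / k r) s
         * sqrt (1 + (tau s / k s) ^ 2)) /\
      taub (sT s) / kb (sT s) = - (cos (psi s) / sin (psi s)))
  /\
  (forall s : R, I s ->
      kb (sT s) ^ 2 / (sqrt (kb (sT s) ^ 2 + taub (sT s) ^ 2)) ^ 3
        * Derive (fun u => taub u / kb u) (sT s)
      = k s ^ 2 / (sqrt (k s ^ 2 + tau s ^ 2)) ^ 3
        * Derive (fun r => tau r / k r) s).
Proof.
  (* The unit length of (x, y, z) and beta' = X are part of the Frenet apparatus of beta. *)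
  intros I J X hF hk_tau hsT haT hFT _ _ hFb hNb.
  assert (hI_open : forall s, I s -> locally s I)
    by (intros s Is; exact (open_and _ _ (open_Rbar_gt a) (open_Rbar_lt b) s Is)).
  assert (hJ : forall s, I s -> J (sT s))
    by (intros s Is; exists s; split; [exact Is | reflexivity]).
  assert (hJ_open : forall u, J u -> locally u J).
  { intros u [s [Is ->]].
    exact (locally_image_of_pos_derive a b sT k hsT (frenet_curvature_pos hF) s Is). }
  split.
  - exists (fun s => arccot (dot (X (sT s)) (BT (sT s)) / dot (X (sT s)) (NT (sT s)))).
    intros s Is; split.
    + replace (_ * _ * _) with (k s * tauT (sT s)).
      * exact (is_derive_comp _ sT s _ _
                 (evolute_direction_angle_deriv hJ_open hFT hFb hNb _ (hJ s Is)) (hsT s Is)).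
      * rewrite (tangent_indicatrix_torsion hI_open hF hk_tau hsT hJ haT hFT s Is).
        unfold frenet_sigma, Rdiv; ring.
    + rewrite cot_arccot.
      exact (evolute_direction_ratio hJ_open hFT hFb hNb _ (hJ s Is)).
  - intros s Is.
    change (frenet_sigma kb taub (sT s) = frenet_sigma k tau s).
    pose proof (frenet_curvature_pos hFT _ (hJ s Is)) as hkT.
    rewrite (evolute_direction_sigma hJ_open hFT hFb hNb _ (hJ s Is)),
            (tangent_indicatrix_torsion hI_open hF hk_tau hsT hJ haT hFT s Is),
            <- (tangent_indicatrix_curvature hI_open hF hsT hJ haT hFT s Is).
    field; lra.
Qed.
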